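(* Let $\mathbb F_q$ be a finite field with $q$ elements, let $n\ge 2$, let $a_1,\dots,a_n,b\in\mathbb F_q^*$ and let $k,k_1,\dots,k_n,m_1,\dots,m_n$ be positive integers. Let $N_q$ be the number of solutions $(x_1,\dots,x_n)\in\mathbb F_q^n$ of $$(a_1x_1^{m_1}+\dots+a_nx_n^{m_n})^k=bx_1^{k_1}\cdots x_n^{k_n},$$ and let $N_q(0)$ and $N_q^*(0)$ be the numbers of solutions of $a_1x_1^{m_1}+\dots+a_nx_n^{m_n}=0$ in $\mathbb F_q^n$ and in $(\mathbb F_q^* )^n$ respectively. If $b$ is a $k_0$th power in $\mathbb F_q$, then $$N_q=k_0(q-1)^{n-1}+N_q(0)-\frac{k_0+q-1}{q-1}\,N_q^*(0)+\sum_{\substack{\psi^d=\varepsilon\\ \psi^{k_0}\ne\varepsilon}}\psi(b)T(\psi),$$ where the sum is over all multiplicative characters $\psi$ of $\mathbb F_q$ whose order divides $d$ but does not divide $k_0$.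
   Context: $k_0=\gcd(k,k_1,\dots,k_n,q-1)$; $M=\mathrm{lcm}[m_1,\dots,m_n]$; $d_j=\gcd(m_j,q-1)$ for $j=1,\dots,n$; $$d=\gcd\Bigl(\sum_{j=1}^n\frac{k_jM}{m_j}-kM,\ \frac{k_1(q-1)}{d_1},\dots,\frac{k_n(q-1)}{d_n},\ q-1\Bigr).$$ $\varepsilon$ denotes the trivial multiplicative character of $\mathbb F_q$. A multiplicative character $\psi$ is extended to $\mathbb F_q$ by $\psi(0)=1$ if $\psi$ is trivial and $\psi(0)=0$ otherwise. For a multiplicative character $\psi$, $$T(\psi)=\frac1{q-1}\sum_{\substack{x_1,\dots,x_n\in\mathbb F_q^*\\ a_1x_1^{m_1}+\dots+a_nx_n^{m_n}\ne0}}\psi^{k_1}(x_1)\cdots\psi^{k_n}(x_n)\,\bar\psi^{k}(a_1x_1^{m_1}+\dots+a_nx_n^{m_n}).$$ *)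

From HB Require Import structures.
From mathcomp Require Import all_boot all_order all_algebra all_field.
Set Implicit Arguments. Unset Strict Implicit. Unset Printing Implicit Defensive.
Import Order.TTheory GRing.Theory Num.Theory.
Local Open Scope ring_scope.

(* Multiplicative characters of a finite field F, valued in algC, extended to
   F by psi 0 = 1 if psi is trivial and psi 0 = 0 otherwise. *)
Definition mchar_trivial (F : finFieldType) (psi : {ffun F -> algC}) : bool :=
  [forall x : F, (x != 0) ==> (psi x == 1)].

Definition is_mchar (F : finFieldType) (psi : {ffun F -> algC}) : Prop :=
  [/\ psi 1 = 1,
      (forall x y : F, x != 0 -> y != 0 -> psi (x * y) = psi x * psi y) &
      psi 0 = (if mchar_trivial psi then 1 else 0)].

Definition mchar_pow_trivial (F : finFieldType) (psi : {ffun F -> algC}) (e : nat) : bool :=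
  [forall x : F, (x != 0) ==> (psi x ^+ e == 1)].

Definition k0_of (q n k : nat) (ks : 'I_n -> nat) : nat :=
  gcdn (gcdn k (\big[gcdn/0%N]_(j < n) ks j)) q.-1.

Definition M_of (n : nat) (ms : 'I_n -> nat) : nat := \big[lcmn/1%N]_(j < n) ms j.

(* d = gcd( sum_j k_j M/m_j - k M, k_1(q-1)/d_1, ..., k_n(q-1)/d_n, q-1 ),
   with d_j = gcd(m_j, q-1); the first entry is an integer, taken in absolute value. *)
Definition d_of (q n k : nat) (ks ms : 'I_n -> nat) : nat :=
  let M := M_of ms in
  gcdn (gcdn `|((\sum_(j < n) ks j * (M %/ ms j))%N)%:Z - (k * M)%N%:Z|%N
             (\big[gcdn/0%N]_(j < n) ((ks j * q.-1) %/ gcdn (ms j) q.-1)%N))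
       q.-1.

Definition diag_form (F : finFieldType) (n : nat) (a : 'I_n -> F) (ms : 'I_n -> nat)
  (x : {ffun 'I_n -> F}) : F := \sum_(j < n) a j * x j ^+ ms j.

Definition Tsum (F : finFieldType) (n k : nat) (a : 'I_n -> F) (ks ms : 'I_n -> nat)
  (psi : {ffun F -> algC}) : algC :=
  (#|F|.-1%:R)^-1 *
  \sum_(x : {ffun 'I_n -> F} | [forall j, x j != 0] && (diag_form a ms x != 0))
     (\prod_(j < n) psi (x j) ^+ ks j) * ((psi (diag_form a ms x))^* ^+ k).

(* Solutions with a vanishing coordinate are exactly the zeros of the form
   having a vanishing coordinate; there are N_q(0) - N_q^*(0) of them.  On the
   torus of points with all coordinates nonzero, orthogonality of the
   multiplicative characters counts the solutions (where the form cannot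
   vanish) as the sum of psi(b) T(psi) over all characters psi.  If psi^{k_0}
   is trivial, then psi(b) = 1 and every term of T(psi) equals 1, so these
   k_0 characters contribute k_0 ((q-1)^n - N_q^*(0)) / (q-1).  For the other
   characters, the substitution x_j -> s_j x_j with all s_j^{m_j} equal to c
   multiplies T(psi) by prod_j psi(s_j)^{k_j} conj(psi(c))^k; taking
   s_j = x^{M/m_j}, or s_j = x^{(q-1)/d_j} at a single j, shows that T(psi)
   vanishes unless psi^d is trivial. *)

From HB Require Import structures.
From mathcomp Require Import all_boot all_order all_algebra all_field.
From mathcomp Require Import cyclic ring.
Import Order.TTheory GRing.Theory Num.Theory.
Local Open Scope ring_scope.

Set Implicit Arguments. Unset Strict Implicit. Unset Printing Implicit Defensive.

Lemma expr_gcdn_eq1 (R : pzRingType) (w : R) m n :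
  w ^+ m = 1 -> w ^+ n = 1 -> w ^+ gcdn m n = 1.
Proof.
case: m => [|m]; first by rewrite gcd0n.
move=> wm1 wn1; have [u v def_uv _] := egcdnP n (ltn0Sn m).
have : w ^+ (u * m.+1) = w ^+ (v * n + gcdn m.+1 n) by rewrite def_uv.
by rewrite exprD mulnC exprM wm1 expr1n mulnC exprM wn1 expr1n mul1r.
Qed.

Lemma unity_expr_mod (R : pzRingType) (w : R) N m m' :
  w ^+ N = 1 -> m = m' %[mod N] -> w ^+ m = w ^+ m'.
Proof. by move=> wN1 eq_mm'; rewrite -(expr_mod m wN1) eq_mm' expr_mod. Qed.

Lemma expr_distn_eq1 (R : idomainType) (w : R) m n :
  w != 0 -> w ^+ m = w ^+ n -> w ^+ `|m%:Z - n%:Z|%N = 1.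
Proof.
wlog le_mn : m n / (m <= n)%N => [hwlog w_neq0 wmn|w_neq0 wmn].
  by case: (leqP m n) => [|/ltnW] le; [|rewrite distnC]; apply: hwlog.
rewrite distnEr //; apply: (mulfI (expf_neq0 m w_neq0)).
by rewrite -exprD subnKC // mulr1 wmn.
Qed.

Lemma conjC_unity_root (w : algC) m : (0 < m)%N -> w ^+ m = 1 -> w^* = w^-1.
Proof.
move=> m_gt0 wm1; have normw : `|w| = 1.
  by apply/eqP; rewrite -(pexpr_eq1 m_gt0) ?normr_ge0 // -normrX wm1 normr1.
by rewrite invC_norm normw expr1n invr1 mul1r.
Qed.

Lemma count_dvdn_iota m c : (0 < m)%N -> count (dvdn m) (iota 0 (c * m)) = c.
Proof.
case: m => // m _; elim: c => [|c IHc] //.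
rewrite mulSn addnC iotaD count_cat IHc add0n -[c.+1]addn1; congr (_ + _)%N.
rewrite [iota _ _.+1]/= [count _ (_ :: _)]/= dvdn_mull // add1n.
apply/eqP; rewrite eqSS eqn0Ngt -has_count; apply/hasPn => i.
rewrite mem_iota => /andP[lt_cm_i lt_i_cm].
rewrite -(subnKC (ltnW lt_cm_i)) dvdn_addr ?dvdn_mull //.
by rewrite gtnNdvd ?subn_gt0 // ltn_subLR ?(ltnW lt_cm_i) // -addSnnS.
Qed.

Section MultiplicativeCharacters.

Variable F : finFieldType.
Local Notation q1 := #|F|.-1.
Implicit Types (psi : {ffun F -> algC}) (x y : F).

Lemma card_finField_pred_gt0 : (0 < q1)%N.
Proof. by rewrite -subn1 subn_gt0 finNzRing_gt1. Qed.

Lemma expf_card_pred x : x != 0 -> x ^+ q1 = 1.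
Proof.
move=> x_neq0; apply: (mulfI x_neq0).
by rewrite mulr1 -exprS prednK ?expf_card // ltnW ?finNzRing_gt1.
Qed.

Lemma finField_prim_root : exists g : F, q1.-primitive_root g.
Proof.
have : has q1.-primitive_root (enum (predC1 (0 : F))).
  apply: has_prim_root card_finField_pred_gt0 _ (enum_uniq _) _.
  - by apply/allP => x; rewrite mem_enum unity_rootE => /expf_card_pred ->.
  - by rewrite -cardE cardC1.
by case/hasP => g _ g_prim; exists g.
Qed.

Lemma mchar_pow_trivialP psi e x :
  mchar_pow_trivial psi e -> x != 0 -> psi x ^+ e = 1.
Proof. by move=> /forallP/(_ x)/implyP psi_e /psi_e/eqP. Qed.

Section Character.

Variable psi : {ffun F -> algC}.
Hypothesis psi_char : is_mchar psi.

Lemma mchar1 : psi 1 = 1.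
Proof. by case: psi_char. Qed.

Lemma mcharM x y : x != 0 -> y != 0 -> psi (x * y) = psi x * psi y.
Proof. by case: psi_char => _ psiM _; apply: psiM. Qed.

Lemma mcharX x m : x != 0 -> psi (x ^+ m) = psi x ^+ m.
Proof.
move=> x_neq0; elim: m => [|m IHm]; first by rewrite !expr0 mchar1.
by rewrite !exprS mcharM ?IHm ?expf_neq0.
Qed.

Lemma mchar_prod n (f : 'I_n -> F) : (forall j, f j != 0) ->
  psi (\prod_(j < n) f j) = \prod_(j < n) psi (f j).
Proof.
move=> f_neq0; pose P u v := u != 0 /\ psi u = v.
suff [] : P (\prod_(j < n) f j) (\prod_(j < n) psi (f j)) by [].
apply: (big_rec2 P); first by split; [exact: oner_neq0 | exact: mchar1].
by move=> j u v _ [u_neq0 <-]; split; [exact: mulf_neq0 | exact: mcharM].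
Qed.

Lemma mchar_unity x : x != 0 -> psi x ^+ q1 = 1.
Proof. by move=> x_neq0; rewrite -mcharX // expf_card_pred // mchar1. Qed.

Lemma mchar_neq0 x : x != 0 -> psi x != 0.
Proof.
move/mchar_unity; apply: contra_eq_neq => ->.
by rewrite expr0n gtn_eqF ?card_finField_pred_gt0 // eq_sym oner_eq0.
Qed.

Lemma mchar_conj x : x != 0 -> (psi x)^* = (psi x)^-1.
Proof. by move/mchar_unity; apply: conjC_unity_root card_finField_pred_gt0. Qed.

Lemma mcharV x : x != 0 -> psi x^-1 = (psi x)^*.
Proof.
move=> x_neq0; rewrite mchar_conj //; apply: (mulIf (mchar_neq0 x_neq0)).
by rewrite -mcharM ?invr_eq0 // !mulVf ?mchar_neq0 // mchar1.
Qed.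

Lemma mchar_div x y : x != 0 -> y != 0 -> psi (x / y) = psi x * (psi y)^*.
Proof. by move=> x_neq0 y_neq0; rewrite mcharM ?invr_eq0 // mcharV. Qed.

End Character.

Variable chars : seq {ffun F -> algC}.
Hypotheses (chars_uniq : uniq chars)
  (charsP : forall psi, psi \in chars <-> is_mchar psi).

Section Enumeration.

Variables (g : F) (z : algC).
Hypotheses (g_prim : q1.-primitive_root g) (z_prim : q1.-primitive_root z).

Lemma prim_root_neq0 : g != 0.
Proof. by rewrite (prim_root_eq0 g_prim) -lt0n card_finField_pred_gt0. Qed.

Definition dlog x : nat :=
  if [pick i : 'I_q1 | g ^+ i == x] is Some i then i else 0.

Lemma dlogK x : x != 0 -> g ^+ dlog x = x.
Proof.
move=> x_neq0; rewrite /dlog; case: pickP => [i /eqP // | no_log].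
have [i x_def] := prim_rootP g_prim (expf_card_pred x_neq0).
by have := no_log i; rewrite -x_def eqxx.
Qed.

Lemma dlog_eq_mod x m : x != 0 -> g ^+ m = x -> dlog x = m %[mod q1].
Proof.
by move=> x_neq0 gm; apply/eqP; rewrite -(eq_prim_root_expr g_prim) dlogK ?gm.
Qed.

Lemma mchar_dlog psi x : is_mchar psi -> x != 0 -> psi x = psi g ^+ dlog x.
Proof. by move=> psi_char x_neq0; rewrite -mcharX ?dlogK ?prim_root_neq0. Qed.

Lemma mchar_pow_trivialE psi e :
  is_mchar psi -> mchar_pow_trivial psi e = (psi g ^+ e == 1).
Proof.
move=> psi_char; apply/forallP/eqP => [/(_ g) /implyP | psi_ge x].
  by move=> /(_ prim_root_neq0) /eqP.
by apply/implyP => x_neq0; rewrite mchar_dlog // exprAC psi_ge expr1n.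
Qed.

Lemma prim_root_expr_unity i : z ^+ i ^+ q1 = 1.
Proof. by rewrite exprAC (prim_expr_order z_prim) expr1n. Qed.

Definition chi (i : nat) : {ffun F -> algC} :=
  [ffun x => if x == 0 then (if (q1 %| i)%N then 1 else 0) else z ^+ i ^+ dlog x].

Lemma chi_unit i x : x != 0 -> chi i x = z ^+ i ^+ dlog x.
Proof. by move=> x_neq0; rewrite ffunE (negbTE x_neq0). Qed.

Lemma chi_prim_root i : chi i g = z ^+ i.
Proof.
rewrite chi_unit ?prim_root_neq0 // (unity_expr_mod (prim_root_expr_unity i)
  (dlog_eq_mod prim_root_neq0 (expr1 g))).
by rewrite expr1.
Qed.

Lemma chi_trivial i : mchar_trivial (chi i) = (q1 %| i)%N.
Proof.
rewrite (prim_order_dvd z_prim); apply/forallP/eqP => [/(_ g) | zi1 x].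
  by rewrite chi_prim_root => /implyP /(_ prim_root_neq0) /eqP.
by apply/implyP => x_neq0; rewrite chi_unit // zi1 expr1n.
Qed.

Lemma chi_mchar i : is_mchar (chi i).
Proof.
have zi1 := prim_root_expr_unity i.
split; last by rewrite ffunE eqxx chi_trivial.
  rewrite chi_unit ?oner_neq0 //.
  by rewrite (unity_expr_mod zi1 (dlog_eq_mod (oner_neq0 F) (expr0 g))).
move=> x y x_neq0 y_neq0; rewrite !chi_unit ?mulf_neq0 // -exprD.
by apply: unity_expr_mod zi1 (dlog_eq_mod _ _); rewrite ?mulf_neq0 // exprD !dlogK.
Qed.

Lemma mchar_chi psi : is_mchar psi -> exists2 i, (i < q1)%N & psi = chi i.
Proof.
move=> psi_char.
have [[i lt_i_q1] /= psi_g] :=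
  prim_rootP z_prim (mchar_unity psi_char prim_root_neq0).
have eq_unit x : x != 0 -> psi x = chi i x.
  by move=> x_neq0; rewrite chi_unit // mchar_dlog // psi_g.
exists i => //; apply/ffunP => x; have [-> | /eq_unit //] := eqVneq x 0.
case: psi_char => _ _ ->; case: (chi_mchar i) => _ _ ->.
congr (if _ then _ else _).
apply: eq_forallb => y; case: (eqVneq y 0) => [// | y_neq0].
by rewrite eq_unit.
Qed.

Lemma perm_chars_chi : perm_eq chars [seq chi i | i <- index_iota 0 q1].
Proof.
apply: uniq_perm chars_uniq _ _.
  rewrite map_inj_in_uniq ?iota_uniq // => i j.
  rewrite !mem_index_iota => /andP[_ lt_i] /andP[_ lt_j].
  move/(congr1 (fun psi : {ffun F -> algC} => psi g)); rewrite !chi_prim_root.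
  by move/eqP; rewrite (eq_prim_root_expr z_prim) !modn_small // => /eqP.
move=> psi; apply/idP/mapP => [/charsP /mchar_chi[i lt_i ->] | [i _ ->]].
  by exists i; rewrite // mem_index_iota.
exact/charsP/chi_mchar.
Qed.

Lemma sum_chi_unit y :
  y != 0 -> \sum_(i < q1) chi i y = if y == 1 then q1%:R else 0.
Proof.
move=> y_neq0; set w := z ^+ dlog y.
rewrite (eq_bigr (fun i : 'I_q1 => w ^+ i)) => [|i _]; last first.
  by rewrite chi_unit // exprAC.
have wq1 : w ^+ q1 = 1 by rewrite exprAC (prim_expr_order z_prim) expr1n.
have [y1 | y_neq1] := eqVneq y 1.
  have -> : w = 1 by rewrite /w y1 (unity_expr_mod (prim_expr_order z_prim)
    (dlog_eq_mod (oner_neq0 F) (expr0 g))).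
  by rewrite (eq_bigr (fun=> 1)) => [|i _]; rewrite ?sumr_const ?card_ord ?expr1n.
have w_neq1 : w != 1.
  apply: contra_neq y_neq1 => /eqP; rewrite -(prim_order_dvd z_prim).
  by rewrite (prim_order_dvd g_prim) dlogK // => /eqP.
apply/eqP; move: (subrX1 w q1); rewrite wq1 subrr => /esym/eqP.
by rewrite mulf_eq0 subr_eq0 (negbTE w_neq1).
Qed.

End Enumeration.

Lemma sum_mchar y :
  y != 0 -> \sum_(psi <- chars) psi y = if y == 1 then q1%:R else 0.
Proof.
have [g g_prim] := finField_prim_root.
have [z z_prim] := C_prim_root_exists card_finField_pred_gt0.
rewrite (perm_big _ (perm_chars_chi g_prim z_prim)) big_map big_mkord.
exact: sum_chi_unit.
Qed.

Lemma count_mchar_pow_trivial e :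
  (e %| q1)%N -> count (fun psi => mchar_pow_trivial psi e) chars = e.
Proof.
move=> e_dvd; have [g g_prim] := finField_prim_root.
have [z z_prim] := C_prim_root_exists card_finField_pred_gt0.
have e_gt0 : (0 < e)%N := dvdn_gt0 card_finField_pred_gt0 e_dvd.
set m := (q1 %/ e)%N.
have m_gt0 : (0 < m)%N by rewrite divn_gt0 // dvdn_leq // card_finField_pred_gt0.
have /permP -> := perm_chars_chi g_prim z_prim; rewrite count_map.
rewrite (eq_count (a2 := dvdn m)) => [|i /=]; last first.
  rewrite (mchar_pow_trivialE g_prim e (chi_mchar g_prim z_prim i)).
  rewrite (chi_prim_root g_prim z_prim).
  by rewrite -exprM -(prim_order_dvd z_prim) -{1}(divnK e_dvd) dvdn_pmul2r.
by rewrite /index_iota subn0 -{1}(divnK e_dvd) -/m mulnC count_dvdn_iota.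
Qed.

End MultiplicativeCharacters.

Section DiagonalCharacterSum.

Variables (F : finFieldType) (n k : nat) (a : 'I_n -> F) (ks ms : 'I_n -> nat).
Variable psi : {ffun F -> algC}.
Hypothesis psi_char : is_mchar psi.
Local Notation q1 := #|F|.-1.
Local Notation L := (diag_form a ms).
Local Notation T := (Tsum k a ks ms psi).

Lemma Tsum_scale (s : 'I_n -> F) (c : F) :
  (forall j, s j != 0) -> c != 0 -> (forall j, s j ^+ ms j = c) ->
  T = (\prod_(j < n) psi (s j) ^+ ks j) * (psi c)^* ^+ k * T.
Proof.
move=> s_neq0 c_neq0 s_ms; rewrite /Tsum mulrCA; congr (_ * _); rewrite mulr_sumr.
pose h (x : {ffun 'I_n -> F}) := [ffun j => s j * x j].
have h_inj : injective h.
  move=> x y /ffunP eq_hxy; apply/ffunP => j; have := eq_hxy j; rewrite !ffunE.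
  exact: mulfI.
have L_h x : L (h x) = c * L x.
  rewrite /diag_form mulr_sumr; apply: eq_bigr => j _.
  by rewrite ffunE exprMn s_ms mulrCA.
have dom_h x : [forall j, h x j != 0] && (L (h x) != 0) =
               [forall j, x j != 0] && (L x != 0).
  rewrite L_h mulf_eq0 (negbTE c_neq0); congr andb.
  by apply: eq_forallb => j; rewrite ffunE mulf_eq0 (negbTE (s_neq0 j)).
rewrite (reindex_inj h_inj); apply: eq_big => [x | x]; first exact: dom_h.
rewrite dom_h => /andP[/forallP x_neq0 L_neq0].
rewrite L_h mcharM // rmorphM exprMn mulrACA -big_split /=; congr (_ * _).
by apply: eq_bigr => j _; rewrite ffunE mcharM // exprMn.
Qed.

Hypothesis T_neq0 : T != 0.

Lemma Tsum_neq0_scale (s : 'I_n -> F) (c : F) :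
  (forall j, s j != 0) -> c != 0 -> (forall j, s j ^+ ms j = c) ->
  (\prod_(j < n) psi (s j) ^+ ks j) * (psi c)^* ^+ k = 1.
Proof.
move=> s_neq0 c_neq0 s_ms; apply: (mulIf T_neq0).
by rewrite mul1r -Tsum_scale.
Qed.

Lemma Tsum_neq0_expr_lcm x : x != 0 ->
  psi x ^+ (\sum_(j < n) ks j * (M_of ms %/ ms j)) = psi x ^+ (k * M_of ms).
Proof.
move=> x_neq0; set M := M_of ms.
have ms_dvd j : (ms j %| M)%N by apply: biglcmn_sup.
have x_ms j : x ^+ (M %/ ms j) ^+ ms j = x ^+ M by rewrite -exprM divnK.
have := Tsum_neq0_scale (fun j => expf_neq0 _ x_neq0) (expf_neq0 _ x_neq0) x_ms.
rewrite (eq_bigr (fun j => psi x ^+ (ks j * (M %/ ms j)))) => [|j _]; last first.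
  by rewrite mcharX ?expf_neq0 // -exprM mulnC.
rewrite mchar_conj ?mcharX ?expf_neq0 // prodrXr exprVn -exprM mulnC.
exact: divr1_eq.
Qed.

Lemma Tsum_neq0_expr_part j x : x != 0 ->
  psi x ^+ ((ks j * q1) %/ gcdn (ms j) q1) = 1.
Proof.
move=> x_neq0; set dj := gcdn (ms j) q1.
have dj_dvd_ms : (dj %| ms j)%N := dvdn_gcdl _ _.
have dj_dvd_q1 : (dj %| q1)%N := dvdn_gcdr _ _.
pose s i := if i == j then x ^+ (q1 %/ dj) else 1.
have s_neq0 i : s i != 0.
  by rewrite /s; case: ifP => _; [exact: expf_neq0 | exact: oner_neq0].
have s_ms i : s i ^+ ms i = 1.
  rewrite /s; case: eqP => [-> | _]; last exact: expr1n.
  rewrite -exprM -[ms j](divnK dj_dvd_ms) mulnCA divnK // mulnC exprM.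
  by rewrite expf_card_pred // expr1n.
have := Tsum_neq0_scale s_neq0 (oner_neq0 F) s_ms.
rewrite mchar1 // conjC1 expr1n mulr1 (bigD1 j) //= big1 => [|i /negbTE i_neq_j].
  by rewrite mulr1 /s eqxx mcharX // -exprM mulnC muln_divA.
by rewrite /s i_neq_j mchar1 // expr1n.
Qed.

Lemma Tsum_neq0_pow_trivial : mchar_pow_trivial psi (d_of #|F| k ks ms).
Proof.
apply/forallP => x; apply/implyP => x_neq0; apply/eqP.
apply: expr_gcdn_eq1; last exact: mchar_unity.
apply: expr_gcdn_eq1.
  exact: expr_distn_eq1 (mchar_neq0 psi_char x_neq0) (Tsum_neq0_expr_lcm x_neq0).
apply: (big_ind (fun e => psi x ^+ e = 1)) => //; first exact: expr_gcdn_eq1.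
by move=> j _; apply: Tsum_neq0_expr_part.
Qed.

End DiagonalCharacterSum.

Lemma sumr1_card (R : pzSemiRingType) (T : finType) (P : pred T) :
  \sum_(x | P x) (1 : R) = #|[set x | P x]|%:R.
Proof.
by rewrite sumr_const; congr (_ *+ _); apply: eq_card => x; rewrite inE.
Qed.

Lemma card_setID (T : finType) (P Q : pred T) :
  (#|[set x | Q x && P x]| + #|[set x | ~~ Q x && P x]| = #|[set x | P x]|)%N.
Proof.
rewrite -(cardsID [set x | Q x] [set x | P x]).
by congr (_ + _)%N; apply: eq_card => x; rewrite !inE andbC.
Qed.

Lemma natr_card_pred_neq0 (F : finFieldType) : #|F|.-1%:R != 0 :> algC.
Proof. by rewrite pnatr_eq0 -lt0n card_finField_pred_gt0. Qed.

Section DiagonalEquation.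

Variables (F : finFieldType) (n k : nat) (a : 'I_n -> F) (b : F).
Variables ks ms : 'I_n -> nat.
Local Notation q1 := #|F|.-1.
Local Notation vec := {ffun 'I_n -> F}.
Local Notation L := (diag_form a ms).
Local Notation on_torus x := [forall j, x j != 0].
Local Notation solves x := (L x ^+ k == b * \prod_(j < n) x j ^+ ks j).

Lemma card_torus :
  addn #|[set x : vec | on_torus x && (L x != 0)]|
       #|[set x : vec | on_torus x && (L x == 0)]| = (q1 ^ n)%N.
Proof.
transitivity #|[set x : vec | on_torus x]|.
  rewrite -[RHS](card_setID _ (fun x : vec => L x != 0)).
  by congr addn; apply: eq_card => x; rewrite !inE andbC ?negbK.
rewrite -[n in (_ ^ n)%N]card_ord -(cardC1 (0 : F)) -card_ffun_on.
by apply: eq_card => x; rewrite inE.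
Qed.

Hypotheses (k_gt0 : (0 < k)%N) (ks_gt0 : forall j, (0 < ks j)%N).

Lemma solves_off_torus (x : vec) : ~~ on_torus x -> solves x = (L x == 0).
Proof.
rewrite negb_forall => /existsP[j]; rewrite negbK => /eqP xj0.
by rewrite (bigD1 j) //= xj0 expr0n gtn_eqF // mul0r mulr0 expf_eq0 k_gt0.
Qed.

Lemma card_solutions_split :
  addn #|[set x : vec | solves x]| #|[set x : vec | on_torus x && (L x == 0)]| =
  addn #|[set x : vec | on_torus x && solves x]| #|[set x : vec | L x == 0]|.
Proof.
rewrite -(card_setID (fun x : vec => solves x) (fun x => on_torus x)).
rewrite -(card_setID (fun x : vec => L x == 0) (fun x => on_torus x)).
have -> : #|[set x : vec | ~~ on_torus x && solves x]| =
          #|[set x : vec | ~~ on_torus x && (L x == 0)]|.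
  apply: eq_card => x; rewrite !inE.
  by case: (boolP (on_torus x)) => [// | /solves_off_torus ->].
by rewrite addnAC addnA.
Qed.

Lemma Tsum_pow_trivial psi e :
  is_mchar psi -> mchar_pow_trivial psi e ->
  (e %| k)%N -> (forall j, e %| ks j)%N ->
  Tsum k a ks ms psi = #|[set x : vec | on_torus x && (L x != 0)]|%:R / q1%:R.
Proof.
move=> psi_char psi_e e_dvd_k e_dvd_ks.
have psi_dvd1 x m : x != 0 -> (e %| m)%N -> psi x ^+ m = 1.
  by move=> x_neq0 /dvdnP[m' ->]; rewrite mulnC exprM mchar_pow_trivialP ?expr1n.
rewrite /Tsum mulrC -sumr1_card; congr (_ * _).
apply: eq_bigr => x /andP[/forallP x_neq0 L_neq0].
rewrite big1 => [|j _]; last exact: psi_dvd1.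
by rewrite -rmorphXn psi_dvd1 // rmorph1 mulr1.
Qed.

Variable chars : seq {ffun F -> algC}.
Hypotheses (chars_uniq : uniq chars)
  (charsP : forall psi, psi \in chars <-> is_mchar psi).
Hypothesis b_neq0 : b != 0.

Lemma sum_mchar_solves (x : vec) : on_torus x -> L x != 0 ->
  \sum_(psi <- chars)
     psi b * ((\prod_(j < n) psi (x j) ^+ ks j) * (psi (L x))^* ^+ k)
  = if solves x then q1%:R else 0.
Proof.
move=> /forallP x_neq0 L_neq0.
have P_neq0 : \prod_(j < n) x j ^+ ks j != 0.
  by apply/prodf_neq0 => j _; rewrite expf_neq0.
have bP_neq0 : b * \prod_(j < n) x j ^+ ks j != 0 by rewrite mulf_neq0.
have Lk_neq0 : L x ^+ k != 0 by rewrite expf_neq0.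
set Y := b * \prod_(j < n) x j ^+ ks j / L x ^+ k.
have Y_neq0 : Y != 0 by rewrite mulf_neq0 ?invr_eq0.
transitivity (\sum_(psi <- chars) psi Y).
  rewrite !big_seq; apply: eq_bigr => psi /charsP psi_char.
  rewrite mchar_div // (mcharX psi_char) // rmorphXn (mcharM psi_char) //.
  rewrite (mchar_prod psi_char) => [|j]; last exact: expf_neq0.
  rewrite mulrA; congr (_ * _ * _).
  by apply: eq_bigr => j _; rewrite (mcharX psi_char).
rewrite sum_mchar //; congr (if _ then _ else _).
by rewrite /Y; apply/eqP/eqP => [/divr1_eq -> | <-]; last exact: divff.
Qed.

Lemma card_torus_solutions :
  #|[set x : vec | on_torus x && solves x]|%:R =
  \sum_(psi <- chars) psi b * Tsum k a ks ms psi.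
Proof.
have solves_L_neq0 (x : vec) : on_torus x -> solves x -> L x != 0.
  move=> /forallP x_neq0 /eqP Lk; have : L x ^+ k != 0.
    by rewrite Lk mulf_neq0 //; apply/prodf_neq0 => j _; rewrite expf_neq0.
  by apply: contra_neq => ->; rewrite expr0n gtn_eqF.
transitivity
  (\sum_(x : vec | on_torus x && (L x != 0)) if solves x then 1 else 0 : algC).
  rewrite -big_mkcondr sumr1_card; congr _%:R; apply: eq_card => x; rewrite !inE.
  apply/andP/andP => [[x_torus x_solves] | [/andP[x_torus _] //]].
  by rewrite x_torus solves_L_neq0.
symmetry; rewrite /Tsum; under eq_bigr do rewrite mulr_sumr mulr_sumr.
rewrite exchange_big /=; apply: eq_bigr => x /andP[x_torus L_neq0].
under eq_bigr do rewrite mulrCA.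
rewrite -mulr_sumr sum_mchar_solves //.
by case: ifP; rewrite ?mulr0 ?mulVf ?natr_card_pred_neq0.
Qed.

Lemma sum_mchar_Tsum e y :
  (e %| q1)%N -> (e %| k)%N -> (forall j, e %| ks j)%N -> y ^+ e = b ->
  \sum_(psi <- chars) psi b * Tsum k a ks ms psi =
    e%:R * (#|[set x : vec | on_torus x && (L x != 0)]|%:R / q1%:R) +
    \sum_(psi <- chars | mchar_pow_trivial psi (d_of #|F| k ks ms) &&
                         ~~ mchar_pow_trivial psi e)
      psi b * Tsum k a ks ms psi.
Proof.
move=> e_dvd_q1 e_dvd_k e_dvd_ks y_e.
have y_neq0 : y != 0.
  apply: contra_neq b_neq0 => y0; rewrite -y_e y0 expr0n gtn_eqF //.
  exact: dvdn_gt0 (card_finField_pred_gt0 F) e_dvd_q1.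
rewrite (bigID (fun psi => mchar_pow_trivial psi e)) /=; congr (_ + _).
  set U := _ / _; rewrite big_seq_cond (eq_bigr (fun=> U)); last first.
    move=> psi /andP[/charsP psi_char psi_e].
    rewrite -y_e mcharX // mchar_pow_trivialP // mul1r.
    by rewrite (Tsum_pow_trivial psi_char psi_e e_dvd_k e_dvd_ks).
  rewrite -big_seq_cond -{2}(count_mchar_pow_trivial chars_uniq charsP e_dvd_q1).
  rewrite -sum1_count natr_sum mulr_suml.
  by apply: eq_bigr => psi _; rewrite mulr1n mul1r.
rewrite (bigID (fun psi => mchar_pow_trivial psi (d_of #|F| k ks ms))) /=.
rewrite [X in _ + X]big1_seq ?addr0 => [|psi].
  by apply: eq_bigl => psi; rewrite andbC.
move=> /andP[/andP[_ not_d] /charsP psi_char].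
apply/eqP; rewrite mulf_eq0; apply/orP; right; apply: contraR not_d.
exact: Tsum_neq0_pow_trivial.
Qed.

End DiagonalEquation.

Lemma k0_of_dvd_pred (q n k : nat) (ks : 'I_n -> nat) :
  (k0_of q k ks %| q.-1)%N.
Proof. exact: dvdn_gcdr. Qed.

Lemma k0_of_dvd_k (q n k : nat) (ks : 'I_n -> nat) :
  (k0_of q k ks %| k)%N.
Proof. exact: dvdn_trans (dvdn_gcdl _ _) (dvdn_gcdl _ _). Qed.

Lemma k0_of_dvd_ks (q n k : nat) (ks : 'I_n -> nat) j :
  (k0_of q k ks %| ks j)%N.
Proof.
apply: dvdn_trans (dvdn_gcdl _ _) _; apply: dvdn_trans (dvdn_gcdr _ _) _.
exact: biggcdn_inf.
Qed.

Theorem corollary1 (F : finFieldType) (n : nat) (a : 'I_n -> F) (b : F)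
  (k : nat) (ks ms : 'I_n -> nat) (chars : seq {ffun F -> algC}) :
  (2 <= n)%N ->
  (forall j, a j != 0) -> b != 0 ->
  (0 < k)%N -> (forall j, 0 < ks j)%N -> (forall j, 0 < ms j)%N ->
  (* chars enumerates all multiplicative characters of F, without repetition *)
  uniq chars -> (forall psi, psi \in chars <-> is_mchar psi) ->
  let q := #|F| in
  let k0 := k0_of q k ks in
  let d := d_of q k ks ms in
  (exists y : F, y ^+ k0 = b) ->
  let Nq := #|[set x : {ffun 'I_n -> F} |
                (diag_form a ms x) ^+ k == b * \prod_(j < n) x j ^+ ks j]| in
  let Nq0 := #|[set x : {ffun 'I_n -> F} | diag_form a ms x == 0]| in
  let Nq0s := #|[set x : {ffun 'I_n -> F} |
                  [forall j, x j != 0] && (diag_form a ms x == 0)]| in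
  (Nq%:R : algC) =
    k0%:R * (q.-1%:R) ^+ n.-1 + Nq0%:R
    - (k0 + q.-1)%:R / q.-1%:R * Nq0s%:R
    + \sum_(psi <- chars | mchar_pow_trivial psi d && ~~ mchar_pow_trivial psi k0)
        psi b * Tsum k a ks ms psi.
Proof.
move=> n_ge2 _ b_neq0 k_gt0 ks_gt0 _ chars_uniq charsP q k0 d [y y_k0] Nq Nq0 Nq0s.
have := card_solutions_split a b ms k_gt0 ks_gt0; rewrite -/Nq -/Nq0 -/Nq0s.
move=> /(congr1 (fun m => m%:R : algC)); rewrite !natrD => /(canRL (addrK _)) ->.
rewrite (card_torus_solutions _ _ _ k_gt0 chars_uniq charsP b_neq0).
rewrite (sum_mchar_Tsum _ _ chars_uniq charsP b_neq0 (k0_of_dvd_pred _ _ _)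
  (k0_of_dvd_k _ _ _) (k0_of_dvd_ks _ _ _) y_k0).
have := card_torus a ms; rewrite -/Nq0s => /(congr1 (fun m => m%:R : algC)).
rewrite natrD natrX => /(canRL (addrK _)) ->.
rewrite -/q -/k0 -/d -[n in _ ^+ n](prednK (ltnW n_ge2)) exprS.
by have := natr_card_pred_neq0 F; rewrite -/q => q1_neq0; field.
Qed.
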